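(* Let $\mathbf{S}$ be a distributive meet semilattice, $n\ge1$ an integer and $F$ an upset of $\mathbf{S}$. The following are equivalent: (i) $F$ is a prime $n$-filter; (ii) $F$ is a prime upset which is a union of at most $n$ filters; (iii) $F$ is a prime upset and there is a meet-semilattice homomorphism $h\colon\mathbf{S}\to\mathbf{2}^n$ with $F=h^{-1}[P_n]$, where $\mathbf{2}^n$ is the Boolean lattice with $n$ atoms and $P_n$ its set of non-zero elements.
   Context: A meet semilattice is distributive if whenever $x\wedge y\le z$ there are $x'\ge x$, $y'\ge y$ with $x'\wedge y'=z$. For a set $X$, $Y\subseteq_n X$ means $Y$ is a non-empty subset of $X$ with $|Y|\le n$. An $n$-filter on $\mathbf{S}$ is an upset $F$ such that for every non-empty finite $X\subseteq F$: if $\bigwedge Y\in F$ for every $Y\subseteq_n X$ then $\bigwedge X\in F$; a filter is a $1$-filter (possibly empty or total). An upset $F$ of $\mathbf{S}$ is prime if its complement $\mathbf{S}\setminus F$ is upward directed, i.e. any two elements outside $F$ have a common upper bound outside $F$ (the empty complement counts). A prime $n$-filter is an $n$-filter which is a prime upset (equivalently, a meet-prime element of the lattice of $n$-filters on $\mathbf{S}$). *)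

From HB Require Import structures.
From mathcomp Require Import all_boot all_order.
Set Implicit Arguments. Unset Strict Implicit. Unset Printing Implicit Defensive.

Section Defs.
Context {d : Order.disp_t} {S : meetSemilatticeType d}.

Definition smeet (x : S) (s : seq S) : S := foldr Order.meet x s.

Definition distributive_msl : Prop :=
  forall x y z : S, (Order.meet x y <= z)%O ->
    exists x' y' : S, (x <= x')%O /\ (y <= y')%O /\ Order.meet x' y' = z.

Definition upset (F : S -> Prop) : Prop :=
  forall x y : S, (x <= y)%O -> F x -> F y.

(* n-filter: an upset F such that for every non-empty finite X ⊆ F
   (given by a non-empty list x0 :: xs), if the meet of every non-empty
   Y ⊆ X with |Y| <= n lies in F (Y given by a non-empty list y0 :: ys of
   elements of X with at most n distinct entries), then ⋀X ∈ F. *)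
Definition nfilter (n : nat) (F : S -> Prop) : Prop :=
  upset F /\
  forall (x0 : S) (xs : seq S),
    (forall x, x \in x0 :: xs -> F x) ->
    (forall (y0 : S) (ys : seq S),
        (forall y, y \in y0 :: ys -> y \in x0 :: xs) ->
        size (undup (y0 :: ys)) <= n ->
        F (smeet y0 ys)) ->
    F (smeet x0 xs).

Definition msl_filter (F : S -> Prop) : Prop := nfilter 1 F.

(* prime upset: complement is upward directed (empty complement allowed) *)
Definition prime_upset (F : S -> Prop) : Prop :=
  upset F /\
  forall x y : S, ~ F x -> ~ F y ->
    exists z : S, (x <= z)%O /\ (y <= z)%O /\ ~ F z.

Definition prime_nfilter (n : nat) (F : S -> Prop) : Prop :=
  nfilter n F /\ prime_upset F.

(* meet-semilattice homomorphism into the Boolean lattice 2^n,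
   represented as {set 'I_n} (subsets of an n-element set, meet = :&:) *)
Definition msl_hom (n : nat) (h : S -> {set 'I_n}) : Prop :=
  forall x y : S, h (Order.meet x y) = h x :&: h y.

End Defs.

(* A union of at most n filters is an n-filter: if the meet of a finite X were
   in none of them, choose for each filter G_j an element c_j of X outside it;
   the meet of these at most n elements lies in F, hence in some G_j, and then
   so does c_j.

   Conversely, let F be a prime n-filter of a distributive semilattice and call
   a family of elements of F separated when all its pairwise meets are outside
   F.  There is no separated family a_0, ..., a_n: primality gives some z
   outside F above all the a_i & a_j (i <> j), and distributivity writes
   z = w_0 & ... & w_n with a_j <= w_i whenever j <> i.  Any n of the w_i lie
   above a common a_k, so the n-filter property puts z in F.  Hence a maximal
   separated family a_1, ..., a_m has m <= n; maximality makes every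
   {x | x & a_i in F} a filter and F their union.

   Finally, filters G_i (i < m <= n) correspond to the homomorphism
   x |-> {i | x in G_i} into 2^n, whose nonzero values are the union. *)

From mathcomp Require Import all_boot all_order.
From mathcomp Require Import boolp.
Set Implicit Arguments. Unset Strict Implicit. Unset Printing Implicit Defensive.
Import Order.Theory.

Lemma ex_max_nat (P : nat -> Prop) (b : nat) :
  (exists m, P m) -> (forall m, P m -> (m <= b)%N) ->
  exists m, P m /\ forall m', P m' -> (m' <= m)%N.
Proof.
elim: b => [|b IH] [m Pm] Pb.
  by exists m; split=> // m' /Pb; rewrite leqn0 => /eqP->.
have [Pb1|nPb1] := pselect (P b.+1); first by exists b.+1.
apply: IH; first by exists m.
move=> m' Pm'; have := Pb m' Pm'; rewrite leq_eqVlt => /predU1P[m'E|//].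
by rewrite m'E in Pm'.
Qed.

Lemma missed_index (T : eqType) (w : nat -> T) (n : nat) (ys : seq T) :
  {subset ys <= map w (iota 0 n.+1)} -> (size (undup ys) <= n)%N ->
  exists k, (k <= n)%N /\
    forall y, y \in ys -> exists i, [/\ (i <= n)%N, i != k & y = w i].
Proof.
move=> ys_sub ys_size; set X := map w (iota 0 n.+1).
set I := map (index^~ X) (undup ys).
have [k kn kI] : exists2 k, (k <= n)%N & k \notin I.
  apply: contrapT => all_in; suff : (n.+1 <= size I)%N.
    by rewrite size_map ltnNge ys_size.
  rewrite -[n.+1](size_iota 0); apply: uniq_leq_size (iota_uniq _ _) _.
  move=> i; rewrite mem_iota add0n ltnS => /= iin; apply: contrapT => iI.
  by apply: all_in; exists i => //; apply/negP.
exists k; split=> // y yys; exists (index y X).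
have yX := ys_sub y yys; have iX : (index y X < n.+1)%N.
  by rewrite -(size_iota 0 n.+1) -(size_map w) index_mem.
split; first by [].
  by apply: contraNneq kI => <-; apply: map_f; rewrite mem_undup.
by rewrite -{1}(nth_index (w 0) yX) (nth_map 0) ?size_iota // nth_iota.
Qed.

Lemma undup_size_le1 (T : eqType) (y0 y : T) (ys : seq T) :
  (size (undup (y0 :: ys)) <= 1)%N -> y \in y0 :: ys -> y = y0.
Proof.
move=> size_le1 yin; apply/eqP; apply: contraTT size_le1 => yy0.
rewrite -ltnNge; apply: (@leq_trans (size [:: y; y0])) => //.
apply: uniq_leq_size; first by rewrite /= inE yy0.
by move=> t; rewrite !inE mem_undup => /predU1P[->|/eqP->] //; rewrite mem_head.
Qed.

Section Meets.
Context {d : Order.disp_t} {S : meetSemilatticeType d}.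
Local Open Scope order_scope.
Implicit Types (x y t : S) (xs : seq S) (f : nat -> S).

Lemma le_smeetP t x0 xs : t <= smeet x0 xs <-> {in x0 :: xs, forall y, t <= y}.
Proof.
elim: xs => [|x xs IH] /=.
  by split=> [t_le y /[!inE]/eqP->|]; [|apply; rewrite mem_head].
rewrite lexI; split=> [/andP[tx /IH txs] y|t_le].
  by rewrite !inE => /or3P[/eqP->|/eqP->|yxs]; rewrite // txs ?inE ?eqxx ?yxs ?orbT.
rewrite t_le ?inE ?eqxx ?orbT //=; apply/IH => y.
by rewrite inE => /predU1P[->|yxs]; rewrite t_le // !inE ?eqxx ?yxs ?orbT.
Qed.

Lemma smeet_le x0 xs y : y \in x0 :: xs -> smeet x0 xs <= y.
Proof. by move: y; apply/le_smeetP. Qed.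

Lemma smeet_closed (P : S -> Prop) x0 xs :
  (forall x y, P x -> P y -> P (x `&` y)) -> {in x0 :: xs, forall y, P y} ->
  P (smeet x0 xs).
Proof.
move=> PI; elim: xs => [|x xs IH] Pxs /=; first by apply: Pxs; rewrite mem_head.
apply: PI; first by apply: Pxs; rewrite !inE eqxx orbT.
by apply: IH => y; rewrite inE => /predU1P[->|yxs]; apply: Pxs; rewrite !inE ?eqxx ?yxs ?orbT.
Qed.

Definition meet_upto f (k : nat) : S := smeet (f 0%N) (map f (iota 1 k)).

Lemma le_meet_upto t f k : t <= meet_upto f k <-> forall i, (i <= k)%N -> t <= f i.
Proof.
rewrite le_smeetP; split=> [t_le i ik|t_le y].
  by apply: t_le; apply: (map_f f (_ : i \in iota 0 k.+1)); rewrite mem_iota add0n ltnS.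
by case/(@mapP _ _ _ (iota 0 k.+1)) => i; rewrite mem_iota add0n ltnS => /= ik ->; apply: t_le.
Qed.

Lemma meet_upto_le f k i : (i <= k)%N -> meet_upto f k <= f i.
Proof. by move: i; apply/le_meet_upto. Qed.

End Meets.

Section Distributive.
Context {d : Order.disp_t} {S : meetSemilatticeType d}.
Hypothesis S_dist : distributive_msl (S := S).
Local Open Scope order_scope.
Implicit Types (z : S) (a v w : nat -> S).

Definition meet_decomposition (k : nat) a z w : Prop :=
  (forall i j, (i <= k)%N -> (j <= k)%N -> i != j -> a j <= w i) /\
  meet_upto w k = z.

Lemma meet_decomposition_step k a z v :
  meet_decomposition k a z v -> (forall i, (i <= k)%N -> a i `&` a k.+1 <= z) ->
  exists w, meet_decomposition k.+1 a z w.
Proof.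
move=> [av vz] az.
have /choice[pq pqP] : forall i, exists pq : S * S, (i <= k)%N ->
    [/\ a i <= pq.1, a k.+1 <= pq.2 & pq.1 `&` pq.2 = v i].
  move=> i; have [ik|_] := boolP (i <= k)%N; last by exists (z, z).
  have /S_dist[p [q [ap [aq pqv]]]] : a i `&` a k.+1 <= v i.
    by apply: le_trans (az i ik) _; rewrite -vz meet_upto_le.
  by exists (p, q).
pose p i := (pq i).1; pose q i := (pq i).2.
have vp i : (i <= k)%N -> v i <= p i by move=> /pqP[_ _ <-]; apply: leIl.
have vq i : (i <= k)%N -> v i <= q i by move=> /pqP[_ _ <-]; apply: leIr.
exists (fun i => if (i <= k)%N then q i else meet_upto p k); split.
  move=> i j; rewrite (leq_eqVlt i) (leq_eqVlt j) !ltnS => /predU1P[->|ik] /predU1P[->|jk] ij.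
  - by rewrite eqxx in ij.
  - rewrite ltnn; apply/le_meet_upto => l lk.
    have [<-|lj] := eqVneq l j; first by have [] := pqP l lk.
    by apply: le_trans (vp l lk); apply: av.
  - by rewrite ik; have [] := pqP i ik.
  - by rewrite ik; apply: le_trans (vq i ik); apply: av.
apply/eqP; rewrite eq_le; apply/andP; split.
  rewrite -vz; apply/le_meet_upto => i ik; have [_ _ <-] := pqP i ik.
  rewrite lexI; apply/andP; split.
    by apply: le_trans (meet_upto_le _ (leqnn k.+1)) _; rewrite ltnn meet_upto_le.
  by apply: le_trans (meet_upto_le _ (leqW ik)) _; rewrite ik.
have zv i : (i <= k)%N -> z <= v i by rewrite -vz; apply: meet_upto_le.
apply/le_meet_upto => i _; case: ifP => [ik|_]; first exact: le_trans (zv i ik) (vq i ik).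
by apply/le_meet_upto => l lk; apply: le_trans (zv l lk) (vp l lk).
Qed.

Lemma meet_decomposition_exists k a z :
  (forall i j, (i <= k)%N -> (j <= k)%N -> i != j -> a i `&` a j <= z) ->
  exists w, meet_decomposition k a z w.
Proof.
elim: k => [|k IH] az.
  by exists (fun=> z); split=> // i j; rewrite !leqn0 => /eqP-> /eqP->; rewrite eqxx.
have [v dec_v] : exists v, meet_decomposition k a z v.
  by apply: IH => i j ik jk; apply: az; apply: leqW.
apply: (meet_decomposition_step dec_v) => i ik; apply: az => //; first exact: leqW.
by rewrite neq_ltn ltnS ik.
Qed.

End Distributive.

Section Filters.
Context {d : Order.disp_t} {S : meetSemilatticeType d}.
Local Open Scope order_scope.
Implicit Types (F G : S -> Prop).

Lemma msl_filterP G :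
  msl_filter G <-> upset G /\ forall x y, G x -> G y -> G (x `&` y).
Proof.
split=> [[G_up G_filter]|[G_up G_meet]]; last first.
  by split=> // x0 xs Gxs _; apply: smeet_closed.
split=> // x y Gx Gy; apply: (G_filter y [:: x]) => [z|z0 zs zs_sub zs_size].
  by rewrite !inE => /predU1P[->|/eqP->].
have Gz0 : G z0 by have := zs_sub z0 (mem_head _ _); rewrite !inE => /predU1P[->|/eqP->].
apply: G_up Gz0; apply/le_smeetP => z /(undup_size_le1 zs_size)->.
exact: lexx.
Qed.

Definition union_of_filters (n : nat) F : Prop :=
  exists (m : nat) (G : 'I_m -> S -> Prop),
    (m <= n)%N /\ (forall i, msl_filter (G i)) /\ (forall x, F x <-> exists i, G i x).

Definition hom_preimage (n : nat) F : Prop :=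
  exists h : S -> {set 'I_n}, msl_hom h /\ (forall x, F x <-> h x != set0).

Lemma union_of_filters_nfilter n F : union_of_filters n F -> nfilter n F.
Proof.
move=> [m [G [mn [G_filter F_union]]]].
have {}G_filter i := (msl_filterP (G i)).1 (G_filter i).
split=> [x y xy /F_union[i Gx]|x0 xs Fxs meets_in_F].
  by apply/F_union; exists i; apply: (G_filter i).1 Gx.
apply: contrapT => nF.
have /choice[c c_miss] : forall i : 'I_m, exists y, y \in x0 :: xs /\ ~ G i y.
  move=> i; apply: contrapT => all_in; apply: nF; apply/F_union; exists i.
  apply: smeet_closed => [|y yin]; first exact: (G_filter i).2.
  by apply: contrapT => nGy; apply: all_in; exists y.
have [i0 _] := (F_union x0).1 (Fxs x0 (mem_head _ _)).
set Y := [seq c i | i <- enum 'I_m].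
have cY i : c i \in Y by apply: map_f; rewrite mem_enum.
have Y_sub y : y \in c i0 :: Y -> y \in x0 :: xs.
  by rewrite inE => /predU1P[->|/mapP[i _ ->]]; [case: (c_miss i0)|case: (c_miss i)].
have Y_size : (size (undup (c i0 :: Y)) <= n)%N.
  by rewrite /= cY (leq_trans (size_undup _)) // size_map size_enum_ord.
have [j Gj] := (F_union _).1 (meets_in_F (c i0) Y Y_sub Y_size).
apply: (c_miss j).2; apply: (G_filter j).1 _ _ _ Gj.
by apply: smeet_le; rewrite inE cY orbT.
Qed.

Lemma union_of_filters_hom n F : union_of_filters n F -> hom_preimage n F.
Proof.
move=> [m [G [mn [G_filter F_union]]]].
have {}G_filter i := (msl_filterP (G i)).1 (G_filter i).
pose h x := [set i : 'I_n | `[< exists j : 'I_m, val j = val i /\ G j x >]].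
exists h; split=> [x y|x].
  apply/setP => i; rewrite !inE; apply/asboolP/andP.
    move=> [j [ji Gxy]]; split; apply/asboolP; exists j; split=> //;
      by apply: (G_filter j).1 Gxy; rewrite ?leIl ?leIr.
  move=> [/asboolP[j [ji Gx]] /asboolP[j' [j'i Gy]]].
  have jj' : j = j' by apply: val_inj; rewrite ji j'i.
  rewrite -jj' in Gy.
  by exists j; split=> //; apply: (G_filter j).2.
rewrite F_union; split=> [[j Gj]|/set0Pn[i]].
  by apply/set0Pn; exists (widen_ord mn j); rewrite inE; apply/asboolP; exists j.
by rewrite inE => /asboolP[j [_ Gj]]; exists j.
Qed.

Lemma hom_union_of_filters n F : hom_preimage n F -> union_of_filters n F.
Proof.
move=> [h [h_meet F_h]]; exists n, (fun i x => i \in h x).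
split=> //; split=> [i|x]; last by rewrite F_h; split=> [/set0Pn|] [i hi]; [|apply/set0Pn]; exists i.
apply/msl_filterP; split=> [x y xy|x y hx hy]; last by rewrite h_meet inE hx hy.
by rewrite -(meet_l xy) h_meet inE => /andP[].
Qed.

End Filters.

Section Separated.
Context {d : Order.disp_t} {S : meetSemilatticeType d}.
Variable F : S -> Prop.
Hypothesis F_upset : upset F.
Local Open Scope order_scope.
Implicit Types (x y z : S) (a b : nat -> S).

Definition separated (m : nat) a : Prop :=
  (forall i, (i < m)%N -> F (a i)) /\
  (forall i j, (i < m)%N -> (j < m)%N -> i != j -> ~ F (a i `&` a j)).

Definition maximal_separated (m : nat) a : Prop :=
  separated m a /\ forall m' a', separated m' a' -> (m' <= m)%N.

Lemma separated_shrink m a b :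
  separated m a -> (forall i, (i < m)%N -> F (b i)) ->
  (forall i, (i < m)%N -> b i <= a i) -> separated m b.
Proof.
move=> [_ a_sep] Fb ba; split=> // i j im jm ij Fbij; apply: (a_sep i j) => //.
exact: F_upset (leI2 (ba _ im) (ba _ jm)) Fbij.
Qed.

Lemma separated_extend m a x :
  separated m a -> F x -> (forall i, (i < m)%N -> ~ F (a i `&` x)) ->
  separated m.+1 (fun j => if (j < m)%N then a j else x).
Proof.
move=> [Fa a_sep] Fx ax; split=> [i _|i j]; first by case: ifP => // /Fa.
rewrite !ltnS (leq_eqVlt i) (leq_eqVlt j) => /predU1P[->|im] /predU1P[->|jm];
  rewrite ?ltnn ?im ?jm ?eqxx // => ij.
- by rewrite meetC; apply: ax.
- exact: ax.
- exact: a_sep.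
Qed.

Lemma prime_upset_ub c (L : seq S) :
  prime_upset F -> ~ F c ->
  exists z, [/\ ~ F z, c <= z & {in L, forall y, ~ F y -> y <= z}].
Proof.
move=> [_ F_dir] nFc; elim: L => [|y L [z [nFz cz Lz]]]; first by exists c.
have [Fy|nFy] := pselect (F y).
  by exists z; split=> // y'; rewrite inE => /predU1P[-> /(_ Fy)[]|/Lz//].
have [z' [zz' [yz' nFz']]] := F_dir _ _ nFz nFy.
exists z'; split=> //; first exact: le_trans cz zz'.
by move=> y'; rewrite inE => /predU1P[->//|/Lz y'z /y'z/le_trans]; apply.
Qed.

Lemma not_separated_succ n a :
  distributive_msl (S := S) -> (0 < n)%N -> prime_nfilter n F ->
  ~ separated n.+1 a.
Proof.
move=> S_dist n_gt0 [[_ F_nfilter] F_prime] [Fa a_sep].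
have a_sep' i j : (i <= n)%N -> (j <= n)%N -> i != j -> ~ F (a i `&` a j).
  by apply: a_sep.
have [z [nFz _ z_ub]] := prime_upset_ub
  [seq a i `&` a j | i <- iota 0 n.+1, j <- iota 0 n.+1] F_prime (a_sep' 0 1 isT n_gt0 isT).
have [w [aw wz]] : exists w, meet_decomposition n a z w.
  apply: meet_decomposition_exists => // i j ik jk ij; apply: z_ub; last exact: a_sep'.
  by apply: (allpairs_f (fun i j => a i `&` a j)); rewrite mem_iota add0n ltnS.
have Fw i : (i <= n)%N -> F (w i).
  move=> ik; pose j : nat := i == 0%N.
  have jk : (j <= n)%N by rewrite /j; case: (i == 0%N).
  have ij : i != j by rewrite /j; case: (i).
  exact: F_upset (aw i j ik jk ij) (Fa j jk).
apply: nFz; rewrite -wz; apply: F_nfilter.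
  move=> y; change (y \in map w (iota 0 n.+1) -> F y).
  by case/mapP=> i; rewrite mem_iota add0n ltnS => /= ik ->; apply: Fw.
move=> y0 ys ys_sub ys_size.
have [k [kn ys_w]] := missed_index ys_sub ys_size.
apply: F_upset (Fa k kn); apply/le_smeetP => y /ys_w[i [ik ki ->]].
by apply: aw; rewrite // eq_sym.
Qed.

Lemma maximal_separated_cover m a x :
  maximal_separated m a -> F x -> exists i, (i < m)%N /\ F (x `&` a i).
Proof.
move=> [a_sep a_max] Fx; apply: contrapT => no_i.
suff /a_max : separated m.+1 (fun j => if (j < m)%N then a j else x) by rewrite ltnn.
by apply: separated_extend => // i im Fax; apply: no_i; exists i; rewrite meetC.
Qed.

Lemma maximal_separated_filter m a i :
  maximal_separated m a -> (i < m)%N -> msl_filter (fun x => F (x `&` a i)).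
Proof.
move=> [a_sep a_max] im; apply/msl_filterP; split=> [x y xy|x y Fx Fy].
  by apply: F_upset; apply: leI2.
apply: contrapT => nFxy.
(* otherwise a i splits into x `&` a i and y `&` a i *)
pose b j := if j == i then x `&` a i else a j.
have b_sep : separated m b.
  apply: (separated_shrink a_sep) => j jm; rewrite /b.
    by have [_|_] := eqVneq j i; last exact: a_sep.1.
  by have [<-|_] := eqVneq j i; rewrite ?leIr.
suff /a_max : separated m.+1 (fun j => if (j < m)%N then b j else y `&` a i).
  by rewrite ltnn.
apply: separated_extend => // j jm; rewrite /b.
have [_ Fxy|ji] := eqVneq j i.
  by apply: nFxy; apply: F_upset Fxy; rewrite meetACA meetxx.
move=> Faj; apply: (a_sep.2 j i jm im ji).
exact: F_upset (leI2 (lexx _) (leIr _ _)) Faj.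
Qed.

Lemma prime_nfilter_union n :
  distributive_msl (S := S) -> (0 < n)%N -> prime_nfilter n F ->
  union_of_filters n F.
Proof.
move=> S_dist n_gt0 F_prime.
have sep_le m a : separated m a -> (m <= n)%N.
  move=> [Fa a_sep]; rewrite leqNgt; apply/negP => nm.
  apply: (not_separated_succ S_dist n_gt0 F_prime (a := a)); split=> [i|i j] ?.
    by apply: Fa; apply: leq_trans nm.
  by move=> ?; apply: a_sep => //; apply: leq_trans nm.
have [[x0 Fx0]|noF] := pselect (exists x, F x); last first.
  exists 0%N, (fun _ _ => False); split=> //; split=> [[]//|x].
  by split=> [Fx|[[]]//]; case: noF; exists x.
have [m [[a a_sep] a_max]] :
    exists m, (exists a, separated m a) /\ forall m', (exists a, separated m' a) -> (m' <= m)%N.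
  apply: (ex_max_nat (b := n)); last by move=> m' [a' /sep_le].
  by exists 1%N, (fun=> x0); split=> [i _|[] [] //].
have a_max' : maximal_separated m a by split=> // m' a' sep'; apply: a_max; exists a'.
exists m, (fun i x => F (x `&` a i)); split; first exact: sep_le a_sep.
split=> [i|x]; first exact: maximal_separated_filter a_max' (ltn_ord i).
split=> [/(maximal_separated_cover a_max')[i [im Fxa]]|[i Fxa]].
  by exists (Ordinal im).
by apply: F_upset Fxa; apply: leIl.
Qed.

End Separated.

Theorem mainTheorem6 (d : Order.disp_t) (S : meetSemilatticeType d) (n : nat)
  (F : S -> Prop) :
  distributive_msl (S := S) -> 1 <= n -> upset F ->
  (prime_nfilter n F <->
     prime_upset F /\
     exists (m : nat) (G : 'I_m -> S -> Prop),
       m <= n /\ (forall i, msl_filter (G i)) /\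
       (forall x, F x <-> exists i, G i x)) /\
  (prime_nfilter n F <->
     prime_upset F /\
     exists h : S -> {set 'I_n},
       msl_hom h /\ (forall x, F x <-> h x != set0)).
Proof.
move=> S_dist n_gt0 F_upset.
have prime_union : prime_nfilter n F <-> prime_upset F /\ union_of_filters n F.
  split=> [F_prime|[F_prime /union_of_filters_nfilter]]; last by split.
  by split; [exact: F_prime.2 | exact: prime_nfilter_union].
split; first exact: prime_union.
rewrite prime_union; split=> [] [F_prime F_union]; split=> //.
- exact: union_of_filters_hom.
- exact: hom_union_of_filters.
Qed.
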